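(* There exists a recursive coloring function $c_0:\mathbb{N}\rightarrow \{0,1\}^2$ such that for every infinite set $A\subseteq\mathbb{Z}^+$ that does not have weak apartness, $FS^{\leq 2}(A)$ is not monochromatic under $c_0$ (i.e. $A$ is not a solution to $c_0$ for $\mathrm{HT}^{\leq 2}$).
   Context: For $x=\sum_{i=0}^{k}2^{n_i}\in\mathbb{Z}^+$ with $n_0<\cdots<n_k$, set $\mu(x)=n_k$ and $\lambda(x)=n_0$. For each $n$, $B^n=\{x\in\mathbb{Z}^+:\mu(x)=n\}$. A set $A$ has weak apartness if for every natural number $m$, $B^m\cap A$ has at most one element, and for every natural number $l$, there are at most two $x\in A$ with $\lambda(x)=l$. $FS^{\leq 2}(A)=\{\sum_{x\in F}x: F\subseteq A,\ F\text{ nonempty},\ |F|\leq 2\}$. *)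

From Stdlib Require Import Arith List.
Import ListNotations.

Inductive code : Type :=
| CZero : code
| CSucc : code
| CProj : nat -> code
| CComp : code -> list code -> code
| CPrimRec : code -> code -> code
| CMu : code -> code.

Inductive eval : code -> list nat -> nat -> Prop :=
| ev_zero : forall v, eval CZero v 0
| ev_succ : forall x v, eval CSucc (x :: v) (S x)
| ev_proj : forall i v, i < length v -> eval (CProj i) v (nth i v 0)
| ev_comp : forall f gs v ys z,
    eval_list gs v ys -> eval f ys z -> eval (CComp f gs) v z
| ev_prec0 : forall f g v z, eval f v z -> eval (CPrimRec f g) (0 :: v) z
| ev_precS : forall f g n v y z,
    eval (CPrimRec f g) (n :: v) y -> eval g (n :: y :: v) z ->
    eval (CPrimRec f g) (S n :: v) z
| ev_mu : forall f v n,
    eval f (n :: v) 0 ->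
    (forall m, m < n -> exists k, eval f (m :: v) (S k)) ->
    eval (CMu f) v n
with eval_list : list code -> list nat -> list nat -> Prop :=
| evl_nil : forall v, eval_list [] v []
| evl_cons : forall g gs v y ys,
    eval g v y -> eval_list gs v ys -> eval_list (g :: gs) v (y :: ys).

Definition recursive_fun (f : nat -> nat) : Prop :=
  exists p : code, forall n, eval p [n] (f n).

(* A colouring into {0,1}^2 (encoded as bool * bool) is recursive if its
   encoding (b1,b2) |-> 2*b1 + b2 is recursive. *)
Definition enc2 (c : bool * bool) : nat :=
  2 * Nat.b2n (fst c) + Nat.b2n (snd c).

Definition recursive_coloring (c : nat -> bool * bool) : Prop :=
  recursive_fun (fun n => enc2 (c n)).

Definition is_mu (x n : nat) : Prop :=
  Nat.testbit x n = true /\ forall m, n < m -> Nat.testbit x m = false.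

Definition is_lambda (x l : nat) : Prop :=
  Nat.testbit x l = true /\ forall m, m < l -> Nat.testbit x m = false.

Definition B (n : nat) (x : nat) : Prop := 0 < x /\ is_mu x n.

Definition infinite_set (A : nat -> Prop) : Prop :=
  forall N, exists x, A x /\ N < x.

Definition weak_apartness (A : nat -> Prop) : Prop :=
  (forall m x y, B m x -> A x -> B m y -> A y -> x = y) /\
  (forall l x y z, A x -> A y -> A z ->
     is_lambda x l -> is_lambda y l -> is_lambda z l ->
     x = y \/ y = z \/ x = z).

Definition FS2 (A : nat -> Prop) (s : nat) : Prop :=
  A s \/ exists x y, A x /\ A y /\ x <> y /\ s = x + y.

Definition monochromatic (c : nat -> bool * bool) (S : nat -> Prop) : Prop :=
  exists col, forall s, S s -> c s = col.

(* Colour n by the parities of its top binary digit mu(n) and of its lowest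
   binary digit lambda(n).  If x <> y have the same mu, then mu(x + y) = mu(x) + 1.
   If x = 2^l (2a + 1) and y = 2^l (2b + 1) with a = b mod 2, then
   lambda(x + y) = l + 1, and among any three numbers with lambda = l two have
   this form.  So a set without weak apartness contains x <> y with
   c0(x + y) <> c0(x).
   Both digits are found by unbounded search over a decidable predicate, so c0
   is mu-recursive. *)
From Stdlib Require Import Arith List Lia ConstructiveEpsilon.
Import ListNotations.

Lemma eval_proj_at i v x : nth i v 0 = x -> i < length v -> eval (CProj i) v x.
Proof. intros <- Hi. now apply ev_proj. Qed.

Ltac solve_proj := apply eval_proj_at; simpl; [first [reflexivity | lia] | lia].

Lemma eval_comp1 f g v y z : eval g v y -> eval f [y] z -> eval (CComp f [g]) v z.
Proof. intros Hg Hf. eapply ev_comp; [|exact Hf]. repeat constructor; assumption. Qed.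

Lemma eval_comp2 f g1 g2 v y1 y2 z :
  eval g1 v y1 -> eval g2 v y2 -> eval f [y1; y2] z -> eval (CComp f [g1; g2]) v z.
Proof. intros Hg1 Hg2 Hf. eapply ev_comp; [|exact Hf]. repeat constructor; assumption. Qed.

Lemma eval_primrec f g v (r : nat -> nat) :
  eval f v (r 0) -> (forall n, eval g (n :: r n :: v) (r (S n))) ->
  forall n, eval (CPrimRec f g) (n :: v) (r n).
Proof.
  intros Hf Hg n. induction n as [|n IH].
  - now constructor.
  - eapply ev_precS; [exact IH|apply Hg].
Qed.

Lemma eval_mu f v (h : nat -> nat) n :
  (forall k, eval f (k :: v) (h k)) -> h n = 0 -> (forall m, m < n -> h m <> 0) ->
  eval (CMu f) v n.
Proof.
  intros Hf Hn Hlt. constructor.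
  - rewrite <- Hn. apply Hf.
  - intros m Hm. destruct (h m) as [|k] eqn:E; [now destruct (Hlt m Hm)|].
    exists k. rewrite <- E. apply Hf.
Qed.

Definition one_code : code := CComp CSucc [CZero].

Lemma eval_one_code v : eval one_code v 1.
Proof. apply eval_comp1 with 0; constructor. Qed.

Definition pred_code : code := CPrimRec CZero (CProj 0).

Lemma eval_pred_code n : eval pred_code [n] (pred n).
Proof.
  apply (eval_primrec _ _ [] pred); [constructor|].
  intro k. solve_proj.
Qed.

Definition sub_code : code := CPrimRec (CProj 0) (CComp pred_code [CProj 1]).

Lemma eval_sub_code b a : eval sub_code [b; a] (a - b).
Proof.
  apply (eval_primrec _ _ [a] (fun b => a - b)).
  - solve_proj.
  - intro k. apply eval_comp1 with (a - k); [solve_proj|].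
    replace (a - S k) with (pred (a - k)) by lia. apply eval_pred_code.
Qed.

Definition add_code : code := CPrimRec (CProj 0) (CComp CSucc [CProj 1]).

Lemma eval_add_code n m : eval add_code [n; m] (n + m).
Proof.
  apply (eval_primrec _ _ [m] (fun n => n + m)).
  - solve_proj.
  - intro k. apply eval_comp1 with (k + m); [solve_proj|constructor].
Qed.

Definition min_code : code :=
  CComp sub_code [CComp sub_code [CProj 1; CProj 0]; CProj 0].

Lemma eval_min_code a b : eval min_code [a; b] (Nat.min a b).
Proof.
  eapply eval_comp2; [|solve_proj|].
  - eapply eval_comp2; [solve_proj..|apply eval_sub_code].
  - replace (Nat.min a b) with (a - (a - b)) by lia. apply eval_sub_code.
Qed.

Definition odd_code : code := CPrimRec CZero (CComp sub_code [CProj 1; one_code]).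

Lemma eval_odd_code n : eval odd_code [n] (Nat.b2n (Nat.odd n)).
Proof.
  apply (eval_primrec _ _ [] (fun n => Nat.b2n (Nat.odd n))); [constructor|].
  intro k. eapply eval_comp2; [solve_proj|apply eval_one_code|].
  replace (Nat.b2n (Nat.odd (S k))) with (1 - Nat.b2n (Nat.odd k)); [apply eval_sub_code|].
  rewrite Nat.odd_succ, <- Nat.negb_odd. now destruct (Nat.odd k).
Qed.

Lemma div2_succ n : Nat.div2 (S n) = Nat.div2 n + Nat.b2n (Nat.odd n).
Proof.
  pose proof (Nat.div2_odd n) as En. pose proof (Nat.div2_odd (S n)) as ESn.
  rewrite Nat.odd_succ, <- Nat.negb_odd in ESn.
  destruct (Nat.odd n); simpl in *; lia.
Qed.

Definition div2_code : code :=
  CPrimRec CZero (CComp add_code [CProj 1; CComp odd_code [CProj 0]]).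

Lemma eval_div2_code n : eval div2_code [n] (Nat.div2 n).
Proof.
  apply (eval_primrec _ _ [] Nat.div2); [constructor|].
  intro k. eapply eval_comp2; [solve_proj| |].
  - apply eval_comp1 with k; [solve_proj|apply eval_odd_code].
  - rewrite div2_succ. apply eval_add_code.
Qed.

Definition shiftr_code : code := CPrimRec (CProj 0) (CComp div2_code [CProj 1]).

Lemma eval_shiftr_code k n : eval shiftr_code [k; n] (Nat.shiftr n k).
Proof.
  apply (eval_primrec _ _ [n] (Nat.shiftr n)).
  - solve_proj.
  - intro j. apply eval_comp1 with (Nat.shiftr n j);
      [solve_proj|apply eval_div2_code].
Qed.

Definition bit_code : code := CComp odd_code [shiftr_code].

Lemma eval_bit_code k n : eval bit_code [k; n] (Nat.b2n (Nat.testbit n k)).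
Proof.
  apply eval_comp1 with (Nat.shiftr n k); [apply eval_shiftr_code|].
  replace (Nat.testbit n k) with (Nat.odd (Nat.shiftr n k)); [apply eval_odd_code|].
  now rewrite <- Nat.bit0_odd, Nat.shiftr_spec'.
Qed.

(* [Nat.log2 n] is the least k with [Nat.shiftr n (S k) = 0]. *)
Definition log2_code : code := CMu (CComp shiftr_code [CComp CSucc [CProj 0]; CProj 1]).

Lemma eval_log2_code n : eval log2_code [n] (Nat.log2 n).
Proof.
  apply (eval_mu _ _ (fun k => Nat.shiftr n (S k))).
  - intro k. eapply eval_comp2; [|solve_proj|apply eval_shiftr_code].
    apply eval_comp1 with k; [solve_proj|constructor].
  - apply Nat.shiftr_eq_0_iff. destruct n; [now left|right; lia].
  - intros m Hm E. apply Nat.shiftr_eq_0_iff in E as [->|[_ E]]; [|lia].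
    rewrite Nat.log2_nonpos in Hm; lia.
Qed.

(* The guard [n <=? k] makes the search total: [lowest_bit 0 = 0]. *)
Definition lowest_bit_stop (n k : nat) : bool := Nat.testbit n k || (n <=? k).

Lemma lowest_bit_stop_self n : lowest_bit_stop n n = true.
Proof. unfold lowest_bit_stop. now rewrite Nat.leb_refl, Bool.orb_true_r. Qed.

Definition lowest_bit (n : nat) : nat :=
  proj1_sig (epsilon_smallest (fun k => lowest_bit_stop n k = true)
    (fun k => Bool.bool_dec (lowest_bit_stop n k) true)
    (ex_intro _ n (lowest_bit_stop_self n))).

Lemma lowest_bit_spec n :
  lowest_bit_stop n (lowest_bit n) = true /\
  forall m, m < lowest_bit n -> lowest_bit_stop n m = false.
Proof.
  unfold lowest_bit. destruct epsilon_smallest as [k [Hk Hmin]]; simpl.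
  split; [exact Hk|]. intros m Hm.
  destruct (lowest_bit_stop n m) eqn:E; [specialize (Hmin m E); lia|reflexivity].
Qed.

Definition lowest_bit_stop_code : code :=
  CComp min_code [CComp sub_code [bit_code; one_code]; CComp sub_code [CProj 0; CProj 1]].

Definition lowest_bit_stop_val (n k : nat) : nat :=
  Nat.min (1 - Nat.b2n (Nat.testbit n k)) (n - k).

Lemma lowest_bit_stop_val_0 n k : lowest_bit_stop_val n k = 0 <-> lowest_bit_stop n k = true.
Proof.
  unfold lowest_bit_stop_val, lowest_bit_stop.
  destruct (Nat.testbit n k); cbn [Nat.b2n orb].
  - split; [reflexivity|lia].
  - rewrite Nat.leb_le. lia.
Qed.

Definition lowest_bit_code : code := CMu lowest_bit_stop_code.

Lemma eval_lowest_bit_code n : eval lowest_bit_code [n] (lowest_bit n).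
Proof.
  destruct (lowest_bit_spec n) as [Hstop Hmin].
  apply (eval_mu _ _ (lowest_bit_stop_val n)).
  - intro k. eapply eval_comp2; [| |apply eval_min_code].
    + eapply eval_comp2; [apply eval_bit_code|apply eval_one_code|apply eval_sub_code].
    + eapply eval_comp2; [solve_proj..|apply eval_sub_code].
  - now apply lowest_bit_stop_val_0.
  - intros m Hm E. apply lowest_bit_stop_val_0 in E. now rewrite Hmin in E.
Qed.

Definition c0 (n : nat) : bool * bool := (Nat.odd (Nat.log2 n), Nat.odd (lowest_bit n)).

Lemma recursive_c0 : recursive_coloring c0.
Proof.
  set (top := CComp odd_code [log2_code]).
  set (bottom := CComp odd_code [lowest_bit_code]).
  exists (CComp add_code [CComp add_code [top; top]; bottom]). intro n.
  assert (Htop : eval top [n] (Nat.b2n (Nat.odd (Nat.log2 n)))).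
  { apply eval_comp1 with (Nat.log2 n); [apply eval_log2_code|apply eval_odd_code]. }
  assert (Hbottom : eval bottom [n] (Nat.b2n (Nat.odd (lowest_bit n)))).
  { apply eval_comp1 with (lowest_bit n); [apply eval_lowest_bit_code|apply eval_odd_code]. }
  eapply eval_comp2; [eapply eval_comp2; [exact Htop|exact Htop|apply eval_add_code]
                     |exact Hbottom|].
  unfold enc2, c0; simpl fst; simpl snd.
  replace (2 * _ + _) with (Nat.b2n (Nat.odd (Nat.log2 n)) + Nat.b2n (Nat.odd (Nat.log2 n))
                            + Nat.b2n (Nat.odd (lowest_bit n))) by lia.
  apply eval_add_code.
Qed.

Lemma is_mu_log2 x n : 0 < x -> is_mu x n -> Nat.log2 x = n.
Proof.
  intros Hx [Hn Habove].
  destruct (Nat.lt_trichotomy n (Nat.log2 x)) as [H|[H|H]]; [|exact (eq_sym H)|].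
  - specialize (Habove _ H). now rewrite Nat.bit_log2 in Habove by lia.
  - now rewrite Nat.bits_above_log2 in Hn.
Qed.

Lemma log2_add_same x y :
  0 < x -> 0 < y -> Nat.log2 x = Nat.log2 y -> Nat.log2 (x + y) = S (Nat.log2 x).
Proof.
  intros Hx Hy Hxy. apply Nat.log2_unique; [lia|].
  pose proof (Nat.log2_spec x Hx). pose proof (Nat.log2_spec y Hy).
  rewrite Hxy in *. rewrite !Nat.pow_succ_r' in *. lia.
Qed.

Lemma is_lambda_odd_part x l : is_lambda x l -> exists a, x = 2 ^ l * (2 * a + 1).
Proof.
  intros [Hl Hbelow].
  assert (Hlow : x mod 2 ^ l = 0).
  { apply Nat.bits_inj_0. intro m. destruct (Nat.lt_ge_cases m l).
    - rewrite Nat.mod_pow2_bits_low; auto.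
    - now apply Nat.mod_pow2_bits_high. }
  assert (Hodd : Nat.odd (x / 2 ^ l) = true).
  { now rewrite <- Nat.shiftr_div_pow2, <- Nat.bit0_odd, Nat.shiftr_spec'. }
  apply Nat.odd_spec in Hodd as [a Ha]. exists a. rewrite <- Ha.
  pose proof (Nat.div_mod x (2 ^ l) (Nat.pow_nonzero 2 l ltac:(lia))). lia.
Qed.

Lemma lowest_bit_odd_part l a : lowest_bit (2 ^ l * (2 * a + 1)) = l.
Proof.
  set (n := 2 ^ l * (2 * a + 1)).
  assert (Hn : n = (2 * a + 1) * 2 ^ l) by (unfold n; lia).
  assert (Hstop : lowest_bit_stop n l = true).
  { unfold lowest_bit_stop. rewrite Hn, Nat.mul_pow2_bits_high, Nat.sub_diag by lia.
    now rewrite Nat.testbit_odd_0. }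
  assert (Hgo : forall m, m < l -> lowest_bit_stop n m = false).
  { intros m Hm. unfold lowest_bit_stop. rewrite Hn, Nat.mul_pow2_bits_low by assumption.
    apply Nat.leb_gt. pose proof (Nat.pow_gt_lin_r 2 l ltac:(lia)). nia. }
  destruct (lowest_bit_spec n) as [Hbit Hmin].
  destruct (Nat.lt_trichotomy (lowest_bit n) l) as [H|[H|H]]; [|exact H|].
  - now rewrite Hgo in Hbit.
  - now rewrite Hmin in Hstop.
Qed.

Lemma add_odd_parts_same_parity l a b : a mod 2 = b mod 2 ->
  exists e, 2 ^ l * (2 * a + 1) + 2 ^ l * (2 * b + 1) = 2 ^ S l * (2 * e + 1).
Proof.
  intro Hab. exists (a / 2 + b / 2 + a mod 2).
  rewrite <- Nat.mul_add_distr_l, Nat.pow_succ_r', (Nat.mul_comm 2 (2 ^ l)), <- Nat.mul_assoc.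
  f_equal. pose proof (Nat.div_mod_eq a 2). pose proof (Nat.div_mod_eq b 2). lia.
Qed.

Lemma odd_succ_neq m : Nat.odd (S m) <> Nat.odd m.
Proof. rewrite Nat.odd_succ, <- Nat.negb_odd. now destruct (Nat.odd m). Qed.

Section MonochromaticFS2.

Variable A : nat -> Prop.
Hypothesis mono : monochromatic c0 (FS2 A).

Lemma c0_add_distinct x y : A x -> A y -> x <> y -> c0 (x + y) = c0 x.
Proof.
  intros Ax Ay Hxy. destruct mono as [col Hcol].
  rewrite (Hcol x), (Hcol (x + y)); [reflexivity| |now left].
  right. now exists x, y.
Qed.

Lemma mono_B_unique m x y : B m x -> A x -> B m y -> A y -> x = y.
Proof.
  intros [Hx Bx] Ax [Hy By] Ay.
  destruct (Nat.eq_dec x y) as [|Hxy]; [assumption|exfalso].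
  apply is_mu_log2 in Bx, By; [|assumption..].
  pose proof (c0_add_distinct x y Ax Ay Hxy) as E. injection E as E _.
  rewrite log2_add_same, Bx in E by (assumption || congruence).
  exact (odd_succ_neq m E).
Qed.

Lemma mono_odd_parts_parity x y l a b : A x -> A y -> x <> y ->
  x = 2 ^ l * (2 * a + 1) -> y = 2 ^ l * (2 * b + 1) -> a mod 2 <> b mod 2.
Proof.
  intros Ax Ay Hxy Ex Ey Hab.
  destruct (add_odd_parts_same_parity l a b Hab) as [e He].
  pose proof (c0_add_distinct x y Ax Ay Hxy) as E. injection E as _ E.
  rewrite Ex, Ey, He, !lowest_bit_odd_part in E.
  exact (odd_succ_neq l E).
Qed.

Lemma mono_lambda_at_most_two l x y z : A x -> A y -> A z ->
  is_lambda x l -> is_lambda y l -> is_lambda z l -> x = y \/ y = z \/ x = z.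
Proof.
  intros Ax Ay Az Lx Ly Lz.
  destruct (Nat.eq_dec x y) as [|Hxy]; [now left|].
  destruct (Nat.eq_dec y z) as [|Hyz]; [now right; left|].
  destruct (Nat.eq_dec x z) as [|Hxz]; [now right; right|exfalso].
  destruct (is_lambda_odd_part x l Lx) as [a Ea].
  destruct (is_lambda_odd_part y l Ly) as [b Eb].
  destruct (is_lambda_odd_part z l Lz) as [c Ec].
  pose proof (mono_odd_parts_parity x y l a b Ax Ay Hxy Ea Eb).
  pose proof (mono_odd_parts_parity y z l b c Ay Az Hyz Eb Ec).
  pose proof (mono_odd_parts_parity x z l a c Ax Az Hxz Ea Ec).
  pose proof (Nat.mod_upper_bound a 2). pose proof (Nat.mod_upper_bound b 2).
  pose proof (Nat.mod_upper_bound c 2). lia.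
Qed.

Lemma mono_weak_apartness : weak_apartness A.
Proof. split; [exact mono_B_unique|exact mono_lambda_at_most_two]. Qed.

End MonochromaticFS2.

Theorem lemma4p1 :
  exists c0 : nat -> bool * bool,
    recursive_coloring c0 /\
    forall A : nat -> Prop,
      (forall x, A x -> 0 < x) ->
      infinite_set A ->
      ~ weak_apartness A ->
      ~ monochromatic c0 (FS2 A).
Proof.
  exists c0. split; [exact recursive_c0|].
  intros A _ _ Hwa Hmono. exact (Hwa (mono_weak_apartness A Hmono)).
Qed.
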